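(* Let $a\in\mathbb{Z}$ and $m\in\mathbb{Z}$ with $m>0$, and let $s$, $m_s$, $a_0$, $d_i$, $d_i^1$ be as in the context. Then: (i) $a=a_0\,d_0^1d_1^1\cdots d_{s-1}^1$; (ii) $m=d_0d_1\cdots d_{s-1}\,m_s=(d_0^1)^1(d_1^1)^2(d_2^1)^3\cdots(d_{s-1}^1)^s\,m_s$, so in particular $m_s\mid m$; (iii) $\gcd(a_0,m_s)=1$ and $\gcd(d_i^1,m_s)=1$ for all $0\le i\le s-1$; consequently $\gcd(a,m_s)=1$ and $a^{\varphi(m_s)}\equiv 1\pmod{m_s}$.
   Context: $\gcd$ denotes the greatest common divisor, always chosen positive, with the convention $\gcd(0,n)=n$ for $n>0$. $\varphi$ denotes Euler's totient function. Let $a\in\mathbb{Z}$ and $m\in\mathbb{Z}$ with $m>0$. The sequences are defined as follows. - Put $d_0=\gcd(a,m)$, $a_0=a/d_0$ and $m_0=m/d_0$. - For $i\ge 1$, and only as long as $d_{i-1}\neq 1$, put $d_i=\gcd(d_{i-1},m_{i-1})$, $m_i=m_{i-1}/d_i$ and $d_{i-1}^1=d_{i-1}/d_i$. The index $s\ge 0$ is the least index with $d_s=1$; such an index exists. Empty products equal $1$, so when $s=0$ the statements read $a=a_0$ and $m=m_0$. *)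

From mathcomp Require Import all_boot all_order all_algebra.
Set Implicit Arguments. Unset Strict Implicit. Unset Printing Implicit Defensive.
Import Order.TTheory GRing.Theory Num.Theory.
Local Open Scope ring_scope.

(* The recursion is extended past the first index s with d_s = 1 (it then
   stabilises: d_i = 1, m_i = m_s), but only indices <= s are used. *)
Fixpoint dm (a m : int) (i : nat) : int * int :=
  match i with
  | 0%N => let d := gcdz a m in (d, (m %/ d)%Z)
  | i'.+1 => let p := dm a m i' in
             let d := gcdz p.1 p.2 in (d, (p.2 %/ d)%Z)
  end.

Definition seq_d (a m : int) (i : nat) : int := (dm a m i).1.
Definition seq_m (a m : int) (i : nat) : int := (dm a m i).2.
Definition seq_a0 (a m : int) : int := (a %/ seq_d a m 0)%Z.
Definition seq_d1 (a m : int) (i : nat) : int :=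
  (seq_d a m i %/ seq_d a m i.+1)%Z.

From mathcomp Require Import all_boot all_order all_algebra.
From mathcomp Require Import cyclic ring.
Import Order.TTheory GRing.Theory Num.Theory.
Local Open Scope ring_scope.

(* Every step of the recursion splits an integer x into gcd(x, y) times x/gcd(x, y),
   so a and m telescope into the products (i) and (ii).  Dividing two numbers by
   their gcd leaves coprime quotients; hence a_0 is coprime to m_0 and d_i^1 is
   coprime to m_{i+1}, and both stay coprime to the divisor m_s of these.  Then a,
   a product of such factors, is coprime to m_s, and Euler's theorem applies. *)

Lemma gcdz_gt0 (x : int) [y : int] : 0 < y -> 0 < gcdz x y.
Proof.
by move=> y_gt0; rewrite lt_def gcdz_eq0 negb_and (lt0r_neq0 y_gt0) orbT.
Qed.

Lemma coprimez_div_gcdz (x y : int) : 0 < y ->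
  coprimez (x %/ gcdz x y)%Z (y %/ gcdz x y)%Z.
Proof.
move=> y_gt0; set g := gcdz x y; have g_gt0 : 0 < g := gcdz_gt0 x y_gt0.
have gcd_div : gcdz (x %/ g)%Z (y %/ g)%Z * g = g.
  by rewrite -[X in _ * X = _](gtz0_abs g_gt0) mulz_gcdl !divzK ?dvdz_gcdl ?dvdz_gcdr.
by apply/eqP/(mulIf (lt0r_neq0 g_gt0)); rewrite gcd_div mul1r.
Qed.

Lemma coprimez_dvdzr (x y z : int) : coprimez x y -> (z %| y)%Z -> coprimez x z.
Proof. by move=> co_xy /coprimez_dvdr; apply. Qed.

Lemma coprimez_prodl (I : Type) (r : seq I) (P : pred I) (F : I -> int) (y : int) :
  (forall i, P i -> coprimez (F i) y) -> coprimez (\prod_(i <- r | P i) F i) y.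
Proof.
move=> co_F; apply: (big_ind (coprimez^~ y)) => //.
- by rewrite /coprimez gcd1z.
- by move=> u v co_u co_v; rewrite coprimezMl co_u.
Qed.

Lemma expz_totient_mod (a n : int) : 0 < n -> coprimez a n ->
  (a ^+ totient `|n| == 1 %[mod n])%Z.
Proof.
move=> n_gt0 co_an; apply/eqP.
have r_ge0 : 0 <= (a %% n)%Z by rewrite modz_ge0 ?gt_eqF.
have co_rn : coprime `|(a %% n)%Z| `|n| by rewrite -coprimezE /coprimez gcdz_modl.
rewrite -modzXm -(gez0_abs r_ge0) -modz_abs -natz -natrX natz !modz_nat.
by rewrite (Euler_exp_totient co_rn) -(modz_nat 1) modz_abs.
Qed.

Section FactorChain.
Context {R : comPzRingType} {f g : nat -> R}.
Hypothesis f_factor : forall i, f i = g i * f i.+1.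

Lemma prod_factor_chain k : f 0 = (\prod_(i < k) g i) * f k.
Proof.
elim: k => [|k IHk]; first by rewrite big_ord0 mul1r.
by rewrite big_ord_recr /= IHk f_factor mulrA.
Qed.

Lemma prod_factor_chain_pow k :
  \prod_(i < k) f i = (\prod_(i < k) g i ^+ i.+1) * f k ^+ k.
Proof.
elim: k => [|k IHk]; first by rewrite !big_ord0 expr0 mul1r.
rewrite !big_ord_recr /= IHk f_factor !exprMn !exprS; ring.
Qed.

End FactorChain.

Section DivisorSequence.
Variables (a m : int).
Hypothesis m_gt0 : 0 < m.
Local Notation d := (seq_d a m).
Local Notation M := (seq_m a m).
Local Notation d1 := (seq_d1 a m).

Lemma seq_a0_factor : a = seq_a0 a m * d 0.
Proof. by rewrite divzK // dvdz_gcdl. Qed.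

Lemma m_factor : m = d 0 * M 0.
Proof. by rewrite mulrC divzK // dvdz_gcdr. Qed.

Lemma seq_m_factor i : M i = d i.+1 * M i.+1.
Proof. by rewrite mulrC divzK // dvdz_gcdr. Qed.

Lemma seq_d_factor i : d i = d1 i * d i.+1.
Proof. by rewrite divzK // dvdz_gcdl. Qed.

Lemma seq_m_gt0 i : 0 < M i.
Proof.
elim: i => [|i M_gt0].
  have d_gt0 : 0 < d 0 := gcdz_gt0 a m_gt0.
  by move: m_gt0; rewrite {1}m_factor pmulr_rgt0.
have d_gt0 : 0 < d i.+1 := gcdz_gt0 (d i) M_gt0.
by move: M_gt0; rewrite seq_m_factor pmulr_rgt0.
Qed.

Lemma m_prod_seq_d k : m = (\prod_(i < k.+1) d i) * M k.
Proof.
rewrite big_ord_recl -mulrA -(prod_factor_chain seq_m_factor); exact: m_factor.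
Qed.

Lemma seq_m_dvd i k : (M (i + k) %| M i)%Z.
Proof.
elim: k => [|k IHk]; first by rewrite addn0 dvdzz.
by apply: dvdz_trans IHk; rewrite addnS (seq_m_factor (i + k)) dvdz_mull.
Qed.

Lemma coprimez_seq_a0 : coprimez (seq_a0 a m) (M 0).
Proof. exact: coprimez_div_gcdz. Qed.

Lemma coprimez_seq_d1 i : coprimez (d1 i) (M i.+1).
Proof. exact: coprimez_div_gcdz (seq_m_gt0 i). Qed.

End DivisorSequence.

Theorem mainTheorem4 (a m : int) (s : nat) :
  0 < m ->
  seq_d a m s = 1 ->
  (forall i : nat, (i < s)%N -> seq_d a m i != 1) ->
  (* (i) *)
  a = seq_a0 a m * \prod_(i < s) seq_d1 a m i /\
  (* (ii) *)
  m = (\prod_(i < s) seq_d a m i) * seq_m a m s /\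
  m = (\prod_(i < s) seq_d1 a m i ^+ i.+1) * seq_m a m s /\
  (seq_m a m s %| m)%Z /\
  (* (iii) *)
  gcdz (seq_a0 a m) (seq_m a m s) = 1 /\
  (forall i : nat, (i < s)%N -> gcdz (seq_d1 a m i) (seq_m a m s) = 1) /\
  gcdz a (seq_m a m s) = 1 /\
  (a ^+ totient `|seq_m a m s|%N == 1 %[mod seq_m a m s])%Z.
Proof.
(* Minimality of s is not needed: any index with d_s = 1 will do. *)
move=> m_gt0 ds_1 _.
have d_chain := prod_factor_chain (seq_d_factor a m).
have a_eq : a = seq_a0 a m * \prod_(i < s) seq_d1 a m i.
  by rewrite {1}(seq_a0_factor a m) (d_chain s) ds_1 mulr1.
have m_eq : m = (\prod_(i < s) seq_d a m i) * seq_m a m s.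
  by rewrite {1}(m_prod_seq_d a m s) big_ord_recr /= ds_1 mulr1.
have co_d1 i : (i < s)%N -> coprimez (seq_d1 a m i) (seq_m a m s).
  move=> lt_is; apply: coprimez_dvdzr (coprimez_seq_d1 a m m_gt0 i) _.
  by rewrite -(subnKC lt_is) seq_m_dvd.
have co_a0 : coprimez (seq_a0 a m) (seq_m a m s).
  by apply: coprimez_dvdzr (coprimez_seq_a0 a m m_gt0) _; rewrite -[s]add0n seq_m_dvd.
have co_a : coprimez a (seq_m a m s).
  by rewrite {1}a_eq coprimezMl co_a0 coprimez_prodl // => i _; apply: co_d1.
do 2 (split=> //); split.
  by rewrite {1}m_eq (prod_factor_chain_pow (seq_d_factor a m)) ds_1 expr1n mulr1.
split; first by apply/dvdzP; exists (\prod_(i < s) seq_d a m i).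
do 3 (split; first by [apply/eqP | move=> i /co_d1/eqP]).
exact: expz_totient_mod (seq_m_gt0 a m m_gt0 s) co_a.
Qed.
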